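(* Let $n$ and $0<n_1<\cdots<n_d<n$ be integers with $m_1=n_1$, $m_k=n_k-n_{k-1}$ ($2\le k\le d$), $m_{d+1}=n-n_d$, and equip $\mathrm{Flag}(n_1,\dots,n_d;n)=\{(VJ_1V^{\mathsf T},\dots,VJ_{d+1}V^{\mathsf T}):V\in\mathrm{O}(n)\}\subseteq(\mathbb{R}^{n\times n})^{d+1}$ with the metric induced by the Frobenius inner product. Let $V_0\in\mathrm{O}(n)$ and $A,B\in\mathfrak{so}(n)$ with $A(k,k)=B(k,k)=0$ for $k=1,\dots,d+1$. Let $V(t)=V_0\exp(tA)$, so that $c(t)=V(t)(J_1,\dots,J_{d+1})V(t)^{\mathsf T}$ is the geodesic through $V_0(J_1,\dots,J_{d+1})V_0^{\mathsf T}$ with initial direction $V_0(AJ_1-J_1A,\dots,AJ_{d+1}-J_{d+1}A)V_0^{\mathsf T}$. Then the parallel transport along $c$ of $Y(0)=V_0(BJ_1-J_1B,\dots,BJ_{d+1}-J_{d+1}B)V_0^{\mathsf T}$ is \[ Y(t)=V(t)\big(X(t)J_1-J_1X(t),\dots,X(t)J_{d+1}-J_{d+1}X(t)\big)V(t)^{\mathsf T}, \] where $X(t)$ solves $\dot X(t)=\tfrac12\,\pi([X(t),A])$, $X(0)=B$.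
   Context: $J_k=\operatorname{diag}(-I_{m_1},\dots,-I_{m_{k-1}},I_{m_k},-I_{m_{k+1}},\dots,-I_{m_{d+1}})$ for $k=1,\dots,d+1$. $V(M_1,\dots,M_{d+1})V^{\mathsf T}$ denotes $(VM_1V^{\mathsf T},\dots,VM_{d+1}V^{\mathsf T})$. For an $n\times n$ matrix $M$, $M(p,q)$ denotes its $(p,q)$ block in the partition $n=m_1+\cdots+m_{d+1}$; for $M\in\mathfrak{so}(n)$, $\pi(M)$ is obtained by setting all diagonal blocks to zero; $[X,A]=XA-AX$. Parallel transport is with respect to the Levi-Civita connection of the induced metric, i.e. $Y$ is parallel iff the orthogonal projection of $\dot Y(t)$ onto $\mathbb{T}_{c(t)}\mathrm{Flag}$ vanishes. *)

From HB Require Import structures.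
From mathcomp Require Import all_boot all_order all_algebra.
From mathcomp Require Import all_classical all_reals all_analysis.
Set Implicit Arguments. Unset Strict Implicit. Unset Printing Implicit Defensive.
Import Order.TTheory GRing.Theory Num.Theory.
Import numFieldNormedType.Exports.
Local Open Scope ring_scope.

Section FlagDefs.
Variable R : realType.

(* block index (in 'I_(d+1), 0-based) of the row/column i : 'I_n for the
   partition n = m_1 + ... + m_{d+1} determined by ns = (n_1,...,n_d):
   blk i = #{ k | n_k <= i } (i is 0-based). *)
Definition blk (d n : nat) (ns : 'I_d -> nat) (i : 'I_n) : 'I_d.+1 :=
  inord #|[set k : 'I_d | (ns k <= i)%N]|.

Definition Jmat (d n : nat) (ns : 'I_d -> nat) (k : 'I_d.+1) : 'M[R]_n :=
  \matrix_(i, j) (if i == j then (if blk ns i == k then 1 else -1) else 0).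

Definition ambient (d n : nat) := 'I_d.+1 -> 'M[R]_n.

Definition orthogonal_mx (n : nat) (V : 'M[R]_n) : Prop := V *m V^T = 1%:M.

Definition skew_mx (n : nat) (A : 'M[R]_n) : Prop := A^T = - A.

Definition diag_blocks_zero (d n : nat) (ns : 'I_d -> nat) (A : 'M[R]_n) : Prop :=
  forall i j : 'I_n, blk ns i = blk ns j -> A i j = 0.

Definition piblk (d n : nat) (ns : 'I_d -> nat) (M : 'M[R]_n) : 'M[R]_n :=
  \matrix_(i, j) (if blk ns i == blk ns j then 0 else M i j).

Definition flag_pt (d n : nat) (ns : 'I_d -> nat) (V : 'M[R]_n) : ambient d n :=
  fun k => V *m @Jmat d n ns k *m V^T.

Definition in_flag (d n : nat) (ns : 'I_d -> nat) (P : ambient d n) : Prop :=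
  exists V : 'M[R]_n, orthogonal_mx V /\ P = flag_pt ns V.

Definition expm (n : nat) (M : 'M[R]_n) : 'M[R]_n :=
  \matrix_(i, j) limn (fun N : nat => ((\sum_(k < N) (k`!%:R)^-1 *: M ^+ k) i j : R)).

Definition mx_deriv (n : nat) (F : R -> 'M[R]_n) (t : R) (D : 'M[R]_n) : Prop :=
  forall i j : 'I_n, derivable (fun s => F s i j) t 1 /\
                     derive1 (fun s => F s i j) t = D i j.

Definition amb_deriv (d n : nat) (G : R -> ambient d n) (t : R) (D : ambient d n) : Prop :=
  forall k : 'I_d.+1, mx_deriv (fun s => G s k) t (D k).

Definition tangent (d n : nat) (ns : 'I_d -> nat) (P W : ambient d n) : Prop :=
  exists G : R -> ambient d n,
    (forall s, in_flag ns (G s)) /\ G 0 = P /\ amb_deriv G 0 W.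

Definition frob (d n : nat) (P Q : ambient d n) : R :=
  \sum_(k < d.+1) \sum_(i < n) \sum_(j < n) P k i j * Q k i j.

(* Y is a vector field along c which is parallel for the Levi-Civita connection
   of the induced metric: Y(t) is tangent at c(t), Y is differentiable, and the
   orthogonal projection of Y'(t) onto T_{c(t)}Flag vanishes, i.e. Y'(t) is
   Frobenius-orthogonal to T_{c(t)}Flag. *)
Definition parallel_along (d n : nat) (ns : 'I_d -> nat)
    (c Y : R -> ambient d n) : Prop :=
  forall t : R, tangent ns (c t) (Y t) /\
    exists Yd : ambient d n, amb_deriv Y t Yd /\
      forall W, tangent ns (c t) W -> frob Yd W = 0.

End FlagDefs.

Arguments blk {d n} ns i.
Arguments Jmat {R d n} ns k.
Arguments piblk {R d n} ns M.
Arguments flag_pt {R d n} ns V.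
Arguments in_flag {R d n} ns P.
Arguments expm {R n} M.
Arguments tangent {R d n} ns P W.
Arguments parallel_along {R d n} ns c Y.

(* Write V = V(t) and [M, N] = M N - N M.  Since V' = V A and X' = (1/2) pi([X, A]), the
   pullback V^T Y_k' V is T_k = [A, [X, J_k]] + [X', J_k].  A tangent vector W at V J V^T pulls
   back to W'_k = V^T W_k V with W'_k J_k + J_k W'_k = 0 and W'_k J_l + J_k W'_l = W'_l J_k +
   J_l W'_k (differentiate P_k P_k = 1 and P_k P_l = P_l P_k along a curve in Flag).  At an entry
   (i, j) with i in block p and j in block q this leaves only W'_p(i,j) = -W'_q(i,j), and only
   when p <> q.  As A and X vanish on the diagonal blocks, T_p(i,j) = T_q(i,j), so Y' is
   Frobenius-orthogonal to every tangent vector.  X keeps zero diagonal blocks because pi kills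
   them in X', and X stays skew because Z = X + X^T solves Z' = (1/2) pi([Z, A]), along which
   tr (Z^T Z) is constant, and Z(0) = 0. *)

From HB Require Import structures.
From mathcomp Require Import all_boot all_order all_algebra.
From mathcomp Require Import all_classical all_reals all_analysis.
From mathcomp Require Import ring lra.
Import Order.TTheory GRing.Theory Num.Theory.
Import numFieldNormedType.Exports.
Local Open Scope ring_scope.
Set Implicit Arguments. Unset Strict Implicit. Unset Printing Implicit Defensive.

Section MatrixDerivative.
Variables (R : realType) (n : nat).
Implicit Types (F G : R -> 'M[R]_n) (M D E : 'M[R]_n) (t : R).

Definition is_mx_derive t F D :=
  forall i j, is_derive t (1 : R) (fun s => F s i j) (D i j).

Lemma mx_deriveP F t D : mx_deriv F t D <-> is_mx_derive t F D.
Proof.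
split=> [dF i j | dF i j].
  by have [/derivableP + <-] := dF i j; rewrite derive1E.
by split; [exact: ex_derive | rewrite derive1E; exact: derive_val].
Qed.

Lemma is_mx_derive_eq F t D E : is_mx_derive t F D -> D = E -> is_mx_derive t F E.
Proof. by move=> + <-. Qed.

Lemma is_mx_derive_cst M t : is_mx_derive t (fun=> M) 0.
Proof. by move=> i j; rewrite mxE; exact: is_derive_cst. Qed.

Lemma is_mx_deriveD F G t D E :
  is_mx_derive t F D -> is_mx_derive t G E -> is_mx_derive t (fun s => F s + G s) (D + E).
Proof.
move=> dF dG i j; rewrite mxE.
have -> : (fun s => (F s + G s) i j) = (fun s => F s i j) + (fun s => G s i j).
  by apply/funext => s; rewrite mxE.
exact: is_deriveD.
Qed.

Lemma is_mx_deriveZ F t D (a : R) :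
  is_mx_derive t F D -> is_mx_derive t (fun s => a *: F s) (a *: D).
Proof.
move=> dF i j; rewrite mxE.
have -> : (fun s => (a *: F s) i j) = a *: (fun s => F s i j).
  by apply/funext => s; rewrite !mxE.
exact: is_deriveZ.
Qed.

Lemma is_mx_deriveB F G t D E :
  is_mx_derive t F D -> is_mx_derive t G E -> is_mx_derive t (fun s => F s - G s) (D - E).
Proof.
move=> dF dG; apply: is_mx_deriveD => // i j; rewrite -scaleN1r.
have := is_mx_deriveZ (-1) dG i j.
by under eq_fun do rewrite scaleN1r.
Qed.

Lemma is_mx_derive_tr F t D :
  is_mx_derive t F D -> is_mx_derive t (fun s => (F s)^T) D^T.
Proof.
move=> dF i j; rewrite mxE.
by under eq_fun do rewrite mxE; exact: dF.
Qed.

Lemma is_mx_deriveM F G t D E :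
  is_mx_derive t F D -> is_mx_derive t G E ->
  is_mx_derive t (fun s => F s *m G s) (D *m G t + F t *m E).
Proof.
move=> dF dG i j.
have -> : (fun s => (F s *m G s) i j) =
    \sum_(l < n) ((fun s => F s i l) * (fun s => G s l j)).
  by rewrite fct_sumE; apply/funext => s; rewrite mxE.
apply: is_derive_eq; first by apply: is_derive_sum => l; apply: is_deriveM.
rewrite !mxE -big_split /=; apply: eq_bigr => l _.
by rewrite /GRing.scale /= addrC mulrC [G t l j * _]mulrC.
Qed.

Lemma is_mx_deriveMl M F t D :
  is_mx_derive t F D -> is_mx_derive t (fun s => M *m F s) (M *m D).
Proof.
move=> dF; apply: is_mx_derive_eq (is_mx_deriveM (is_mx_derive_cst M t) dF) _.
by rewrite mul0mx add0r.
Qed.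

Lemma is_mx_deriveMr M F t D :
  is_mx_derive t F D -> is_mx_derive t (fun s => F s *m M) (D *m M).
Proof.
move=> dF; apply: is_mx_derive_eq (is_mx_deriveM dF (is_mx_derive_cst M t)) _.
by rewrite mulmx0 addr0.
Qed.

Lemma is_mx_derive_unique F t D E : is_mx_derive t F D -> is_mx_derive t F E -> D = E.
Proof.
move=> dD dE; apply/matrixP => i j.
by rewrite -(@derive_val _ _ _ _ _ _ _ (dD i j)) -(@derive_val _ _ _ _ _ _ _ (dE i j)).
Qed.

Lemma is_mx_derive_0_is_cst F s u : (forall t, is_mx_derive t F 0) -> F s = F u.
Proof.
move=> dF; apply/matrixP => i j.
by apply: (@is_derive_0_is_cst _ (fun x => F x i j)) => t; have := dF t i j; rewrite mxE.
Qed.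

Lemma is_derive_mxtrace F t D :
  is_mx_derive t F D -> is_derive t (1 : R) (fun s => \tr (F s)) (\tr D).
Proof.
move=> dF; rewrite /mxtrace -fct_sumE.
by apply: is_derive_sum => i; exact: dF.
Qed.

End MatrixDerivative.

Lemma exprZn_mx (R : comPzRingType) n (M : 'M[R]_n) (c : R) k :
  (c *: M) ^+ k = c ^+ k *: M ^+ k.
Proof.
elim: k => [|k IH]; first by rewrite !expr0 scale1r.
by rewrite !exprS IH -!mulmxE -scalemxAl -scalemxAr scalerA.
Qed.

Lemma limn_sum_mulr (R : realType) n (f : 'I_n -> nat -> R) (c : 'I_n -> R) :
  (forall l, cvgn (f l)) ->
  limn (fun N => \sum_l f l N * c l) = \sum_l limn (f l) * c l.
Proof.
move=> cvg_f; apply: cvg_lim => //.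
apply: (@cvg_big R^o 'I_n +%R 0 xpredT add_continuous nat eventually _
   (fun l N => f l N * c l) (fun l => limn (f l) * c l)) => // l _.
exact: cvgMr_tmp.
Qed.

Section MatrixExponential.
Variables (R : realType) (n : nat).
Implicit Types (M : 'M[R]_n) (a b : 'I_n).

Definition mx_l1norm M : R := \sum_a \sum_b `|M a b|.

Lemma mx_l1norm_ge0 M : 0 <= mx_l1norm M.
Proof. by apply: sumr_ge0 => a _; apply: sumr_ge0. Qed.

Lemma normr_exprn_entry_le M k a b : `|(M ^+ k) a b| <= mx_l1norm M ^+ k.
Proof.
elim: k a b => [|k IH] a b.
  by rewrite expr0 -idmxE mxE; case: (a == b); rewrite ?normr1 ?normr0.
rewrite exprSr -mulmxE mxE (le_trans (ler_norm_sum _ _ _)) //.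
apply: (@le_trans _ _ (\sum_l mx_l1norm M ^+ k * `|M l b|)).
  by apply: ler_sum => l _; rewrite normrM ler_wpM2r.
rewrite -mulr_sumr exprSr ler_wpM2l ?exprn_ge0 ?mx_l1norm_ge0 //.
apply: ler_sum => l _; rewrite (bigD1 b) //= lerDl.
by apply: sumr_ge0 => *.
Qed.

(* The j-th termwise derivative of the power series of s |-> expm (s *: M) a b. *)
Definition expm_coef M a b (j k : nat) : R := (k`!%:R)^-1 * (M ^+ (k + j)) a b.

Lemma pseries_diffs_expm_coef M a b j :
  pseries_diffs (expm_coef M a b j) = expm_coef M a b j.+1.
Proof.
apply/funext => k; rewrite /pseries_diffs /expm_coef factS natrM invfM mulrA mulVKf //.
by rewrite addSnnS.
Qed.

Lemma is_cvg_pseries_expm_coef M a b j x : cvgn (pseries (expm_coef M a b j) x).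
Proof.
set r := mx_l1norm M.
apply: normed_cvg.
apply: (@series_le_cvg _ _ (fun k => r ^+ j * ((r * `|x|) ^+ k / k`!%:R))).
- by move=> k /=.
- move=> k; apply: mulr_ge0; first by rewrite exprn_ge0 ?mx_l1norm_ge0.
  by apply: divr_ge0; rewrite ?exprn_ge0 ?mulr_ge0 ?mx_l1norm_ge0.
- move=> k; rewrite /= /expm_coef !normrM normfV normr_nat normrX.
  rewrite [X in _ <= X](_ : _ = k`!%:R^-1 * r ^+ (k + j) * `|x| ^+ k);
    last by rewrite exprMn exprD; ring.
  by rewrite ler_wpM2r ?exprn_ge0 // ler_wpM2l ?invr_ge0 // normr_exprn_entry_le.
- have -> : (fun k => r ^+ j * ((r * `|x|) ^+ k / k`!%:R)) =
     r ^+ j *: exp_coeff (r * `|x|) by apply/funext.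
  exact: is_cvg_seriesZ (is_cvg_series_exp_coeff _).
Qed.

Lemma expmZ_entry M s a b : expm (s *: M) a b = limn (pseries (expm_coef M a b 0) s).
Proof.
rewrite mxE (_ : (fun N : nat => _) = pseries (expm_coef M a b 0) s) //.
apply/funext => N.
rewrite summxE /pseries /series /= big_mkord; apply: eq_bigr => k _.
by rewrite mxE exprZn_mx mxE /expm_coef addn0; ring.
Qed.

Lemma is_mx_derive_expmZ M t :
  is_mx_derive t (fun s => expm (s *: M)) (expm (t *: M) *m M).
Proof.
move=> a b; under eq_fun do rewrite expmZ_entry.
have dS : is_derive t (1 : R) (fun s => limn (pseries (expm_coef M a b 0) s))
                               (limn (pseries (expm_coef M a b 1) t)).
  rewrite -pseries_diffs_expm_coef; apply: (@pseries_snd_diffs _ _ (`|t| + 1)).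
  - exact: is_cvg_pseries_expm_coef.
  - by rewrite pseries_diffs_expm_coef; exact: is_cvg_pseries_expm_coef.
  - by rewrite !pseries_diffs_expm_coef; exact: is_cvg_pseries_expm_coef.
  - by rewrite [ltRHS]ger0_norm ?addr_ge0 // ltrDl.
apply: is_derive_eq dS _.
have -> : pseries (expm_coef M a b 1) t =
    (fun N => \sum_l pseries (expm_coef M a l 0) t N * M l b).
  apply/funext => N; rewrite /pseries /series /=.
  under [RHS]eq_bigr do rewrite big_distrl /=.
  rewrite exchange_big /=; apply: eq_bigr => k _.
  rewrite /expm_coef addn0 addn1 exprSr -mulmxE mxE big_distrr big_distrl /=.
  by apply: eq_bigr => l _; ring.
rewrite limn_sum_mulr; last by move=> l; exact: is_cvg_pseries_expm_coef.
by rewrite mxE; apply: eq_bigr => l _; rewrite expmZ_entry.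
Qed.

Lemma expmZ0 M : expm (0 *: M) = 1%:M.
Proof.
apply/matrixP => a b; rewrite expmZ_entry.
apply: (@lim_near_cst R^o) => //; near=> N.
have N_gt0 : (0 < N)%N by near: N; exists 1%N.
rewrite /pseries /series /= -(prednK N_gt0) big_nat_recl //= big1 ?addr0.
  by rewrite /expm_coef expr0 mulr1 fact0 invr1 mul1r.
by move=> k _; rewrite expr0n /= mulr0.
Unshelve. all: by end_near.
Qed.

Lemma orthogonal_mxC M : orthogonal_mx M -> M^T *m M = 1%:M.
Proof. exact: mulmx1C. Qed.

Lemma orthogonal_mxM M N : orthogonal_mx M -> orthogonal_mx N -> orthogonal_mx (M *m N).
Proof.
rewrite /orthogonal_mx => oM oN.
by rewrite trmx_mul mulmxA -(mulmxA M) oN mulmx1 oM.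
Qed.

Lemma orthogonal_expmZ M s : skew_mx M -> orthogonal_mx (expm (s *: M)).
Proof.
move=> skM; rewrite /orthogonal_mx.
rewrite (@is_mx_derive_0_is_cst _ _ (fun x => expm (x *: M) *m (expm (x *: M))^T) s 0).
  by rewrite expmZ0 trmx1 mulmx1.
move=> t; apply: is_mx_derive_eq.
  exact: is_mx_deriveM (is_mx_derive_expmZ M t) (is_mx_derive_tr (is_mx_derive_expmZ M t)).
by rewrite trmx_mul skM mulNmx mulmxN !mulmxA addrN.
Qed.

End MatrixExponential.

Lemma mxtrace_tr_mul_self_eq0 (R : realDomainType) m n (M : 'M[R]_(m, n)) :
  \tr (M^T *m M) = 0 -> M = 0.
Proof.
have mul_self_ge0 (x : R) : 0 <= x * x by rewrite -expr2 sqr_ge0.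
rewrite /mxtrace => tr0; apply/matrixP => i j; rewrite mxE.
have colj0 : \sum_l M l j * M l j = 0.
  have diag_ge0 k : true -> 0 <= (M^T *m M) k k.
    by move=> _; rewrite mxE; apply: sumr_ge0 => l _; rewrite mxE.
  have := @psumr_eq0P _ _ _ _ diag_ge0 tr0 j isT.
  by rewrite mxE; under eq_bigr do rewrite mxE.
have := @psumr_eq0P _ _ _ _ (fun l _ => mul_self_ge0 (M l j)) colj0 i isT.
by move/eqP; rewrite mulf_eq0 orbb => /eqP.
Qed.

Section FlagSigns.
Variables (R : realType) (d n : nat) (ns : 'I_d -> nat).
Implicit Types (M : 'M[R]_n) (k l : 'I_d.+1) (i j : 'I_n).

Definition Jsign k i : R := if blk ns i == k then 1 else -1.

Lemma Jsign_blk i : Jsign (blk ns i) i = 1.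
Proof. by rewrite /Jsign eqxx. Qed.

Lemma Jsign_neq k i : blk ns i != k -> Jsign k i = -1.
Proof. by rewrite /Jsign => /negPf ->. Qed.

Lemma Jsign_sqr k i : Jsign k i * Jsign k i = 1.
Proof. by rewrite /Jsign; case: ifP; rewrite ?mulr1 ?mulrNN ?mulr1. Qed.

Lemma Jmat_diag k : Jmat ns k = diag_mx (\row_i Jsign k i) :> 'M[R]_n.
Proof.
apply/matrixP => i j; rewrite !mxE /Jsign.
by case: eqP => [->|_]; rewrite ?mulr1n ?mulr0n.
Qed.

Lemma mulmxJE M k i j : (M *m Jmat ns k) i j = M i j * Jsign k j.
Proof. by rewrite Jmat_diag mul_mx_diag !mxE. Qed.

Lemma mulJmxE M k i j : (Jmat ns k *m M) i j = Jsign k i * M i j.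
Proof. by rewrite Jmat_diag mul_diag_mx !mxE mulrC. Qed.

Lemma mulJJ k : Jmat ns k *m Jmat ns k = 1%:M :> 'M[R]_n.
Proof.
apply/matrixP => i j; rewrite mulmxJE !mxE.
by case: eqP => [->|_]; rewrite ?Jsign_sqr ?mul0r.
Qed.

Lemma Jmat_comm k l : Jmat ns k *m Jmat ns l = Jmat ns l *m Jmat ns k :> 'M[R]_n.
Proof.
apply/matrixP => i j; rewrite !mulmxJE !mxE.
by case: eqP => [->|_]; [rewrite mulrC | rewrite !mul0r].
Qed.

End FlagSigns.

Arguments Jsign {R d n} ns k i.

Section BlockProjection.
Variables (R : realType) (d n : nat) (ns : 'I_d -> nat).
Implicit Types (M Z : 'M[R]_n).

Lemma piblk_tr M : (piblk ns M)^T = piblk ns M^T.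
Proof. by apply/matrixP => i j; rewrite !mxE eq_sym. Qed.

Lemma piblkD M N : piblk ns (M + N) = piblk ns M + piblk ns N.
Proof. by apply/matrixP => i j; rewrite !mxE; case: ifP; rewrite ?addr0. Qed.

Lemma mxtrace_mul_piblk Z M :
  diag_blocks_zero ns Z -> \tr (Z *m piblk ns M) = \tr (Z *m M).
Proof.
move=> Z0; apply: eq_bigr => i _; rewrite !mxE; apply: eq_bigr => l _.
by rewrite mxE; case: eqP => [/esym/Z0 ->|]; rewrite ?mul0r.
Qed.

End BlockProjection.

Lemma is_mx_derive_orth_eq0 (R : realType) n (Z D : R -> 'M[R]_n) :
  (forall t, is_mx_derive t Z (D t)) -> (forall t, \tr ((Z t)^T *m D t) = 0) ->
  Z 0 = 0 -> forall t, Z t = 0.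
Proof.
move=> dZ orthZ Z0 t; apply: mxtrace_tr_mul_self_eq0.
have dsqnorm s : is_derive s (1 : R) (fun s => \tr ((Z s)^T *m Z s)) 0.
  apply: is_derive_eq.
    exact: is_derive_mxtrace (is_mx_deriveM (is_mx_derive_tr (dZ s)) (dZ s)).
  by rewrite mxtraceD -mxtrace_tr trmx_mul trmxK orthZ addr0.
by rewrite (is_derive_0_is_cst t 0 dsqnorm) Z0 mulmx0 mxtrace0.
Qed.

Section TransportODE.
Variables (R : realType) (d n : nat) (ns : 'I_d -> nat).
Variables (A B : 'M[R]_n) (X : R -> 'M[R]_n).
Hypotheses (skA : skew_mx A) (skB : skew_mx B) (B0 : diag_blocks_zero ns B).
Hypothesis dX : forall t, is_mx_derive t X (2^-1 *: piblk ns (X t *m A - A *m X t)).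
Hypothesis X0 : X 0 = B.

Lemma ode_diag_blocks_zero t : diag_blocks_zero ns (X t).
Proof.
move=> i j eij; rewrite -(B0 eij) -X0.
apply: (@is_derive_0_is_cst _ (fun s => X s i j)) => s.
by have := dX s i j; rewrite !mxE eij eqxx mulr0.
Qed.

Lemma ode_skew t : skew_mx (X t).
Proof.
pose Z s := X s + (X s)^T.
have Z0 s : diag_blocks_zero ns (Z s).
  move=> i j eij; rewrite !mxE.
  by rewrite (ode_diag_blocks_zero s eij) (ode_diag_blocks_zero s (esym eij)) addr0.
have dZ s : is_mx_derive s Z (2^-1 *: piblk ns (Z s *m A - A *m Z s)).
  apply: is_mx_derive_eq (is_mx_deriveD (dX s) (is_mx_derive_tr (dX s))) _.
  rewrite linearZ /= piblk_tr -scalerDr -piblkD /Z.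
  rewrite linearB /= !trmx_mul skA mulNmx mulmxN opprK.
  by rewrite mulmxDl mulmxDr opprD [- _ + (X s)^T *m A]addrC addrACA.
have ZZ0 : forall s, Z s = 0.
  apply: is_mx_derive_orth_eq0 dZ _ _ => [s|]; last by rewrite /Z X0 skB subrr.
  have symZ : (Z s)^T = Z s by rewrite /Z linearD /= trmxK addrC.
  rewrite symZ -scalemxAr mxtraceZ mxtrace_mul_piblk // mulmxBr raddfB /= mulmxA.
  rewrite [\tr (Z s *m Z s *m A)]mxtrace_mulC [\tr (Z s *m (A *m Z s))]mxtrace_mulC.
  by rewrite mulmxA subrr mulr0.
by have /eqP := ZZ0 t; rewrite /Z addrC addr_eq0 => /eqP.
Qed.

End TransportODE.

Section FlagTangent.
Variables (R : realType) (d n : nat) (ns : 'I_d -> nat).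
Implicit Types (U V M N : 'M[R]_n) (W : ambient R d n) (k l : 'I_d.+1).

Definition commJ M k : 'M[R]_n := M *m Jmat ns k - Jmat ns k *m M.

Lemma commJE M k i j : commJ M k i j = M i j * Jsign ns k j - Jsign ns k i * M i j.
Proof. by rewrite -mulmxJE -mulJmxE !mxE. Qed.

Lemma tangent_flag_pt U M : orthogonal_mx U -> skew_mx M ->
  tangent ns (flag_pt ns U) (fun k => U *m commJ M k *m U^T).
Proof.
move=> oU skM.
have dUexp : is_mx_derive 0 (fun s => U *m expm (s *: M)) (U *m M).
  by apply: is_mx_derive_eq (is_mx_deriveMl U (is_mx_derive_expmZ M 0)) _; rewrite expmZ0 mul1mx.
exists (fun s => flag_pt ns (U *m expm (s *: M))); split; [|split].
- move=> s; exists (U *m expm (s *: M)); split => //.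
  exact: orthogonal_mxM oU (orthogonal_expmZ s skM).
- by rewrite expmZ0 mulmx1.
- move=> k; apply/mx_deriveP.
  apply: is_mx_derive_eq (is_mx_deriveM (is_mx_deriveMr (Jmat ns k) dUexp)
                                        (is_mx_derive_tr dUexp)) _.
  rewrite expmZ0 mulmx1 trmx_mul skM mulNmx mulmxN mulmxBr mulmxBl !mulmxA.
  by rewrite addrC.
Qed.

Lemma flag_pt_mul U k l : orthogonal_mx U ->
  flag_pt ns U k *m flag_pt ns U l = U *m (Jmat ns k *m Jmat ns l) *m U^T.
Proof.
by move=> /orthogonal_mxC oU; rewrite /flag_pt !mulmxA -(mulmxA _ U^T U) oU mulmx1.
Qed.

Lemma conj_mulmx V M N : orthogonal_mx V ->
  V^T *m (M *m N) *m V = (V^T *m M *m V) *m (V^T *m N *m V).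
Proof. by move=> oV; rewrite !mulmxA -(mulmxA _ V V^T) oV mulmx1. Qed.

Lemma conj_flag_pt V k : orthogonal_mx V -> V^T *m flag_pt ns V k *m V = Jmat ns k.
Proof.
by move=> /orthogonal_mxC oV; rewrite /flag_pt !mulmxA oV mul1mx -mulmxA oV mulmx1.
Qed.

Lemma tangent_flag_pt_eqs V W : orthogonal_mx V -> tangent ns (flag_pt ns V) W ->
  let W' k := V^T *m W k *m V in
  (forall k, W' k *m Jmat ns k + Jmat ns k *m W' k = 0) /\
  (forall k l, W' k *m Jmat ns l + Jmat ns k *m W' l =
               W' l *m Jmat ns k + Jmat ns l *m W' k).
Proof.
move=> oV [G [inG [G0 dG]]] W'.
have dGG k l : is_mx_derive 0 (fun s => G s k *m G s l)
                             (W k *m flag_pt ns V l + flag_pt ns V k *m W l).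
  by rewrite -G0; apply: is_mx_deriveM; apply/mx_deriveP.
have conjW k l : V^T *m (W k *m flag_pt ns V l + flag_pt ns V k *m W l) *m V =
                 W' k *m Jmat ns l + Jmat ns k *m W' l.
  rewrite mulmxDr mulmxDl (conj_mulmx (W k) _ oV) (conj_mulmx _ (W l) oV).
  by rewrite (conj_flag_pt k oV) (conj_flag_pt l oV).
split; [move=> k | move=> k l]; rewrite -!conjW.
- have GG1 : (fun s => G s k *m G s k) = fun=> 1%:M.
    apply/funext => s; have [U [oU ->]] := inG s.
    by rewrite flag_pt_mul // mulJJ mulmx1.
  have dGG1 := dGG k k; rewrite GG1 in dGG1.
  by rewrite (is_mx_derive_unique dGG1 (is_mx_derive_cst _ _)) mulmx0 mul0mx.
- have GGC : (fun s => G s k *m G s l) = fun s => G s l *m G s k.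
    apply/funext => s; have [U [oU ->]] := inG s.
    by rewrite !flag_pt_mul // Jmat_comm.
  have dGGkl := dGG k l; rewrite GGC in dGGkl.
  by rewrite (is_mx_derive_unique dGGkl (dGG l k)).
Qed.

Lemma frob_mxtrace (P Q : ambient R d n) : frob P Q = \sum_k \tr ((P k)^T *m Q k).
Proof.
apply: eq_bigr => k _; rewrite /mxtrace exchange_big /=; apply: eq_bigr => j _.
by rewrite mxE; apply: eq_bigr => i _; rewrite mxE.
Qed.

Lemma frob_conj V (T W : ambient R d n) :
  frob (fun k => V *m T k *m V^T) W = frob T (fun k => V^T *m W k *m V).
Proof.
rewrite !frob_mxtrace; apply: eq_bigr => k _.
by rewrite !trmx_mul trmxK -!mulmxA mxtrace_mulC !mulmxA.
Qed.

End FlagTangent.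

Section Transport.
Variables (R : realType) (d n : nat) (ns : 'I_d -> nat).
Implicit Types (A M V : 'M[R]_n) (k l : 'I_d.+1) (i j : 'I_n).

Definition transport_rhs A M : 'M[R]_n := 2^-1 *: piblk ns (M *m A - A *m M).

(* V(t)^T Y_k'(t) V(t) when V' = V A and X' = transport_rhs A X. *)
Definition transport_accel A M k : 'M[R]_n :=
  A *m commJ ns M k - commJ ns M k *m A + commJ ns (transport_rhs A M) k.

Lemma transport_accel_blk A M i j :
  diag_blocks_zero ns A -> diag_blocks_zero ns M -> blk ns i != blk ns j ->
  transport_accel A M (blk ns j) i j = transport_accel A M (blk ns i) i j.
Proof.
move=> A0 M0 ij_neq.
have sqj : Jsign ns (blk ns j) j = 1 :> R by exact: Jsign_blk.
have spi : Jsign ns (blk ns i) i = 1 :> R by exact: Jsign_blk.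
have sqi : Jsign ns (blk ns j) i = -1 :> R by exact: Jsign_neq.
have spj : Jsign ns (blk ns i) j = -1 :> R by apply: Jsign_neq; rewrite eq_sym.
have accelE k : transport_accel A M k i j =
    \sum_l A i l * commJ ns M k l j - \sum_l commJ ns M k i l * A l j
    + (transport_rhs A M i j * Jsign ns k j - Jsign ns k i * transport_rhs A M i j).
  by rewrite -commJE /transport_accel !mxE.
have rhsE : transport_rhs A M i j = 2^-1 * ((M *m A) i j - (A *m M) i j).
  by rewrite !mxE (negPf ij_neq).
have sum_left : \sum_l A i l * commJ ns M (blk ns j) l j - \sum_l A i l * commJ ns M (blk ns i) l j =
                2 * (A *m M) i j.
  rewrite -sumrB mxE mulr_sumr; apply: eq_bigr => l _; rewrite -mulrBr !commJE sqj spj.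
  have [lp|lp] := eqVneq (blk ns l) (blk ns i); first by rewrite (A0 _ _ (esym lp)) !mul0r mulr0.
  have [lq|lq] := eqVneq (blk ns l) (blk ns j); first by rewrite (M0 _ _ lq) !(mul0r, mulr0, subrr).
  by rewrite !Jsign_neq //; ring.
have sum_right : \sum_l commJ ns M (blk ns j) i l * A l j - \sum_l commJ ns M (blk ns i) i l * A l j =
                 2 * (M *m A) i j.
  rewrite -sumrB mxE mulr_sumr; apply: eq_bigr => l _; rewrite -mulrBl !commJE sqi spi.
  have [lp|lp] := eqVneq (blk ns l) (blk ns i); first by rewrite (M0 _ _ (esym lp)) !(mul0r, mulr0, subrr).
  have [lq|lq] := eqVneq (blk ns l) (blk ns j); first by rewrite (A0 _ _ lq) !(mul0r, mulr0, subrr).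
  by rewrite !Jsign_neq //; ring.
apply/eqP; rewrite -subr_eq0; apply/eqP.
rewrite !accelE sqj spi sqi spj rhsE; move: sum_left sum_right; lra.
Qed.

Lemma sum_tangent_entry_eq0 i j (w tau : 'I_d.+1 -> R) :
  (forall k, w k * Jsign ns k j + Jsign ns k i * w k = 0) ->
  (forall k l, w k * Jsign ns l j + Jsign ns k i * w l =
               w l * Jsign ns k j + Jsign ns l i * w k) ->
  (blk ns i != blk ns j -> tau (blk ns j) = tau (blk ns i)) ->
  \sum_k tau k * w k = 0.
Proof.
move=> w_diag w_comm tau_blk.
have [ij_eq|ij_neq] := eqVneq (blk ns i) (blk ns j).
  apply: big1 => k _; suff -> : w k = 0 by rewrite mulr0.
  by have := w_diag k; rewrite /Jsign ij_eq; case: ifP => _; lra.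
have w_out k : k != blk ns i -> k != blk ns j -> w k = 0.
  move=> ki kj; have := w_diag k.
  by rewrite !Jsign_neq 1?eq_sym //; lra.
rewrite (bigD1 (blk ns i)) //= (bigD1 (blk ns j)) /=; last by rewrite eq_sym.
rewrite big1 => [|k /andP[ki kj]]; last by rewrite w_out ?mulr0.
have := w_comm (blk ns i) (blk ns j).
have ji_neq : blk ns j != blk ns i by rewrite eq_sym.
rewrite (tau_blk ij_neq) !Jsign_blk !Jsign_neq // => w_opp.
have -> : w (blk ns i) = - w (blk ns j) by lra.
ring.
Qed.

Lemma frob_transport_accel_tangent A M V (W : ambient R d n) :
  diag_blocks_zero ns A -> diag_blocks_zero ns M -> orthogonal_mx V ->
  tangent ns (flag_pt ns V) W ->
  frob (fun k => V *m transport_accel A M k *m V^T) W = 0.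
Proof.
move=> A0 M0 oV tW; have [W_diag W_comm] := tangent_flag_pt_eqs oV tW.
rewrite frob_conj /frob exchange_big; apply: big1 => i _.
rewrite exchange_big; apply: big1 => j _.
apply: (@sum_tangent_entry_eq0 i j).
- move=> k; have /matrixP/(_ i j) := W_diag k.
  by rewrite [LHS]mxE [RHS]mxE mulmxJE mulJmxE.
- move=> k l; have /matrixP/(_ i j) := W_comm k l.
  by rewrite [LHS]mxE [RHS]mxE !mulmxJE !mulJmxE.
- exact: transport_accel_blk.
Qed.

Lemma is_mx_derive_transport V0 A (X : R -> 'M[R]_n) t k :
  skew_mx A -> is_mx_derive t X (transport_rhs A (X t)) ->
  let V s := V0 *m expm (s *: A) in
  is_mx_derive t (fun s => V s *m commJ ns (X s) k *m (V s)^T)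
                 (V t *m transport_accel A (X t) k *m (V t)^T).
Proof.
move=> skA dX V.
have dV : is_mx_derive t V (V t *m A).
  by apply: is_mx_derive_eq (is_mx_deriveMl V0 (is_mx_derive_expmZ A t)) _; rewrite mulmxA.
have dC : is_mx_derive t (fun s => commJ ns (X s) k) (commJ ns (transport_rhs A (X t)) k).
  exact: is_mx_deriveB (is_mx_deriveMr _ dX) (is_mx_deriveMl _ dX).
apply: is_mx_derive_eq (is_mx_deriveM (is_mx_deriveM dV dC) (is_mx_derive_tr dV)) _.
rewrite [(V t *m A)^T]trmx_mul skA mulNmx mulmxN /transport_accel.
move: (V t) (commJ ns (X t) k) (commJ ns (transport_rhs A (X t)) k) => U C C'.
by rewrite !(mulmxDl, mulmxDr, mulmxN, mulNmx, mulmxA) addrAC.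
Qed.

End Transport.

Theorem corollaryB3 (R : realType) (n d : nat) (ns : 'I_d -> nat)
  (hns_pos : forall k : 'I_d, (0 < ns k < n)%N)
  (hns_inc : forall k l : 'I_d, (k < l)%N -> (ns k < ns l)%N)
  (V0 A B : 'M[R]_n) (X : R -> 'M[R]_n)
  (hV0 : orthogonal_mx V0)
  (hA : skew_mx A) (hB : skew_mx B)
  (hAblk : diag_blocks_zero ns A) (hBblk : diag_blocks_zero ns B)
  (hXode : forall t : R,
      mx_deriv X t (2^-1 *: piblk ns (X t *m A - A *m X t)))
  (hX0 : X 0 = B) :
  let V := fun t : R => V0 *m expm (t *: A) in
  let c := fun t : R => flag_pt ns (V t) in
  let Y := fun (t : R) (k : 'I_d.+1) =>
      V t *m (X t *m Jmat ns k - Jmat ns k *m X t) *m (V t)^T in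
  parallel_along ns c Y /\
  Y 0 = (fun k => V0 *m (B *m Jmat ns k - Jmat ns k *m B) *m V0^T).
Proof.
move=> V c Y.
have dX t : is_mx_derive t X (transport_rhs ns A (X t)) by apply/mx_deriveP.
have oV t : orthogonal_mx (V t) by exact: orthogonal_mxM hV0 (orthogonal_expmZ t hA).
split; last by apply/funext => k; rewrite /Y /V expmZ0 mulmx1 hX0.
move=> t; split; first exact: tangent_flag_pt (oV t) (ode_skew hA hB hBblk dX hX0 t).
exists (fun k => V t *m transport_accel ns A (X t) k *m (V t)^T); split.
- by move=> k; apply/mx_deriveP; exact: is_mx_derive_transport.
- move=> W; apply: frob_transport_accel_tangent (oV t) => //.
  exact: ode_diag_blocks_zero hBblk dX hX0 t.
Qed.
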